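(* Let $n\ge 0$ and $l$ be integers with $n\le l\le 2n$, and fix a linear ordering of the alphabet $\{E,D,N\}$. Then $$\sum_{W\in Sch_L(n,l)} q^{\mathrm{maj}(W)}=\frac{1}{[l-n+1]}\begin{bmatrix}2(l-n)\\ l-n\end{bmatrix}_q\begin{bmatrix} l\\ 2n-l\end{bmatrix}_q \quad\text{if } E<N,$$ and $$\sum_{W\in Sch_L(n,l)} q^{\mathrm{maj}(W)}=\frac{q^{\,l-n}}{[l-n+1]}\begin{bmatrix}2(l-n)\\ l-n\end{bmatrix}_q\begin{bmatrix} l\\ 2n-l\end{bmatrix}_q \quad\text{if } E>N.$$
   Context: A Delannoy path from $(0,0)$ to $(m,n)$ is a lattice path using only the steps $E=(1,0)$, $D=(1,1)$, $N=(0,1)$; a path with $l$ steps is identified with the word $W=w_1w_2\cdots w_l$ over the alphabet $\{E,D,N\}$. $Del(m,n,l)$ denotes the set of Delannoy paths from $(0,0)$ to $(m,n)$ with exactly $l$ steps. A Schröder $n$-path is a Delannoy path from $(0,0)$ to $(n,n)$ that never goes (strictly) above the line $y=x$; $Sch_L(n,l)$ is the set of Schröder $n$-paths with exactly $l$ steps. Given a linear ordering of $\{E,D,N\}$, an index $i$ with $1\le i\le l-1$ is a descent of $W$ if $w_i>w_{i+1}$, and $\mathrm{maj}(W)=\sum_{i \text{ descent}} i$. Notation: $[k]=1+q+\cdots+q^{k-1}$, $[k]!=[1][2]\cdots[k]$ (with $[0]!=1$), and $\begin{bmatrix}a\\ b\end{bmatrix}_q=\frac{[a]!}{[b]![a-b]!}$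 for $0\le b\le a$. *)

From HB Require Import structures.
From mathcomp Require Import all_boot all_order all_algebra.
Set Implicit Arguments. Unset Strict Implicit. Unset Printing Implicit Defensive.
Import Order.TTheory GRing.Theory Num.Theory.

Definition step := 'I_3.
Definition E : step := @Ordinal 3 0 isT.
Definition D : step := @Ordinal 3 1 isT.
Definition N : step := @Ordinal 3 2 isT.

(* x-coordinate reached: number of E and D steps; y-coordinate: N and D steps *)
Definition xcoord (w : seq step) : nat := count (fun s => s != N) w.
Definition ycoord (w : seq step) : nat := count (fun s => s != E) w.

Definition schroeder (n : nat) (W : seq step) : bool :=
  [&& xcoord W == n, ycoord W == n &
      all (fun k => ycoord (take k W) <= xcoord (take k W)) (iota 0 (size W).+1)].

(* A linear ordering of {E,D,N} is given by an injective rank : step -> nat;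
   index i (1-based, 1 <= i <= l-1) is a descent iff rank w_i > rank w_{i+1}. *)
Definition maj (rank : step -> nat) (W : seq step) : nat :=
  \sum_(i < (size W).-1)
     (if rank (nth E W i) > rank (nth E W i.+1) then i.+1 else 0).

Definition qF := {fraction {poly rat}}.
Definition qv : qF := FracField.tofrac 'X.
Local Open Scope ring_scope.
Definition qint (k : nat) : qF := \sum_(i < k) qv ^+ i.
Definition qfact (k : nat) : qF := \prod_(i < k) qint i.+1.
Definition qbinom (a b : nat) : qF := qfact a / (qfact b * qfact (a - b)).

From mathcomp Require Import all_boot all_order all_algebra.
From mathcomp Require Import ring zify.
Import GRing.Theory.

(* A Delannoy word W is encoded by the numbers a, b, d of its E, N, D steps;
   it is a Schroeder path iff it is "ballot" (every prefix has no more N+D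
   than E+D steps, i.e. no more N than E) and a = b.  Appending one letter
   changes maj by |W| exactly when it creates a descent, which depends only
   on the last letter c of W.  Hence the refined generating function
   rgf a b d c e (ballot words with given counts, last letter c and last
   non-D letter e) satisfies a simple recursion in the length.
   We exhibit an explicit closed form cgf for it: a D-free factor ENgf a b e
   (ballot words over {E,N}, a q-ballot number) times a q-binomial counting
   the insertions of the d letters D, and check that cgf satisfies the same
   recursion (this reduces to q-Pascal identities).  Summing over c and e at
   a = b = l - n, d = 2n - l gives [l, 2n-l]_q times a q-Catalan number,
   which is the claimed formula. *)

Set Implicit Arguments.
Unset Strict Implicit.

Local Open Scope ring_scope.

Section QCalculus.
Variables (R : fieldType) (q : R).

Definition qn (k : nat) : R := \sum_(i < k) q ^+ i.
Definition qfac (k : nat) : R := \prod_(i < k) qn i.+1.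
Definition qbin (a b : nat) : R := qfac a / (qfac b * qfac (a - b)).

(* The q-binomial extended by zero when k > n, and its shift k |-> k - 1
   (zero at k = 0); these are the forms in which Pascal's rules hold
   without side conditions. *)
Definition qchoose (n k : nat) : R := if (k <= n)%N then qbin n k else 0.
Definition qchoose_pred (n k : nat) : R := if k is k'.+1 then qchoose n k' else 0.

Lemma qn_mul k : qn k * (1 - q) = 1 - q ^+ k.
Proof.
elim: k => [|k IH]; first by rewrite /qn big_ord0 mul0r subrr.
rewrite /qn big_ord_recr /= mulrDl -/(qn k) IH exprS; ring.
Qed.

Lemma qnD a b : qn (a + b) = qn a + q ^+ a * qn b.
Proof.
rewrite /qn big_split_ord /=; congr (_ + _).
by rewrite mulr_sumr; apply: eq_bigr => i _; rewrite exprD.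
Qed.

Lemma qnS k : qn k.+1 = qn k + q ^+ k.
Proof. by rewrite /qn big_ord_recr. Qed.

Lemma qn1 : qn 1 = 1.
Proof. by rewrite qnS /qn big_ord0 add0r expr0. Qed.

Lemma qfac0 : qfac 0 = 1.
Proof. by rewrite /qfac big_ord0. Qed.

Lemma qfacS k : qfac k.+1 = qfac k * qn k.+1.
Proof. by rewrite /qfac big_ord_recr. Qed.

Lemma qchoose_gt n k : (n < k)%N -> qchoose n k = 0.
Proof. by move=> h; rewrite /qchoose ifF //; apply/negbTE; rewrite -ltnNge. Qed.

Lemma qchoose_le n k : (k <= n)%N -> qchoose n k = qbin n k.
Proof. by move=> h; rewrite /qchoose h. Qed.

Lemma qchooseE j k : qchoose (k + j) k = qfac (k + j) / (qfac k * qfac j).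
Proof. by rewrite /qchoose leq_addr /qbin addKn. Qed.

(* From now on q is not a root of unity, so no q-integer vanishes. *)
Hypothesis q_gen : forall k, (0 < k)%N -> 1 - q ^+ k != 0.

Lemma qn_neq0 k : (0 < k)%N -> qn k != 0.
Proof.
move=> k0; apply/negP => /eqP qk0; have := q_gen k0.
by rewrite -qn_mul qk0 mul0r eqxx.
Qed.

Lemma qfac_neq0 k : qfac k != 0.
Proof.
elim: k => [|k IH]; first by rewrite qfac0 oner_eq0.
by rewrite qfacS mulf_neq0 // qn_neq0.
Qed.

Lemma qchoose_n0 n : qchoose n 0 = 1.
Proof. by rewrite /qchoose /qbin subn0 qfac0 mul1r divff // qfac_neq0. Qed.

Lemma qchoose_nn n : qchoose n n = 1.
Proof. by rewrite /qchoose leqnn /qbin subnn qfac0 mulr1 divff // qfac_neq0. Qed.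

Lemma qpascal n k : qchoose n.+1 k.+1 = qchoose n k + q ^+ k.+1 * qchoose n k.+1.
Proof.
case: (ltngtP k n) => h.
- have [j ->] : exists j, n = (k.+1 + j)%N by exists (n - k.+1)%N; lia.
  rewrite (_ : qchoose (k.+1 + j).+1 k.+1 = qchoose (k.+1 + j.+1) k.+1);
    last by rewrite addnS.
  rewrite (_ : qchoose (k.+1 + j) k = qchoose (k + j.+1) k); last by rewrite addSnnS.
  rewrite !qchooseE (_ : (k.+1 + j.+1) = (k.+1 + j).+1)%N; last by rewrite addnS.
  rewrite (qfacS (k.+1 + j)) (qfacS k) (qfacS j) -addnS qnD -addSnnS.
  have h1 := qfac_neq0 (k.+1 + j); have h2 := qfac_neq0 k; have h3 := qfac_neq0 j.
  have h4 := @qn_neq0 k.+1 isT; have h5 := @qn_neq0 j.+1 isT.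
  field; by rewrite h2 h3 h4 h5.
- by rewrite !qchoose_gt ?mulr0 ?addr0 //; lia.
- by rewrite h !qchoose_nn qchoose_gt // mulr0 addr0.
Qed.

Lemma qpascal' p k :
  qchoose (p + k).+1 k.+1 = q ^+ p * qchoose (p + k) k + qchoose (p + k) k.+1.
Proof.
case: p => [|j].
  by rewrite add0n !qchoose_nn qchoose_gt // expr0; ring.
rewrite (_ : qchoose (j.+1 + k).+1 k.+1 = qchoose (k.+1 + j.+1) k.+1);
  last by congr qchoose; lia.
rewrite (_ : qchoose (j.+1 + k) k = qchoose (k + j.+1) k); last by congr qchoose; lia.
rewrite (_ : qchoose (j.+1 + k) k.+1 = qchoose (k.+1 + j) k.+1); last by congr qchoose; lia.
rewrite !qchooseE (_ : (k.+1 + j.+1) = (k.+1 + j).+1)%N; last by rewrite addnS.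
rewrite (qfacS (k.+1 + j)) (qfacS k) (qfacS j) -addnS (addnC k.+1 j.+1) qnD -addSnnS.
have h1 := qfac_neq0 (k.+1 + j); have h2 := qfac_neq0 k; have h3 := qfac_neq0 j.
have h4 := @qn_neq0 k.+1 isT; have h5 := @qn_neq0 j.+1 isT.
field; by rewrite h2 h3 h4 h5.
Qed.

Lemma qpascal_pred n k : qchoose n.+1 k = qchoose_pred n k + q ^+ k * qchoose n k.
Proof.
case: k => [|k]; last exact: qpascal.
by rewrite /= !qchoose_n0 expr0 mul1r add0r.
Qed.

Lemma qpascal'_pred p k :
  qchoose (p + k).+1 k = q ^+ p.+1 * qchoose_pred (p + k) k + qchoose (p + k) k.
Proof.
case: k => [|k]; first by rewrite /= !qchoose_n0 mulr0 add0r.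
by rewrite /= -addSnnS qpascal'.
Qed.

Lemma qchoose_central a : qchoose (a.+1 + a) a.+1 = qchoose (a.+1 + a) a.
Proof.
rewrite [RHS](_ : _ = qchoose (a + a.+1) a); last by congr qchoose; lia.
by rewrite !qchooseE (addnC a a.+1) [qfac a * _]mulrC.
Qed.

Lemma qcatalan K : qchoose (K.+1 + K) K - q * qchoose_pred (K.+1 + K) K
  = (qn K.+2)^-1 * qbin (K.+1 + K.+1) K.+1.
Proof.
rewrite /qbin addKn.
case: K => [|K].
  rewrite /= qchoose_n0 mulr0 subr0 !qfacS qfac0 qn1 (qnS 1) qn1 expr1 !mul1r.
  have h : 1 + q != 0 by rewrite -[q]expr1 -qn1 -qnS qn_neq0.
  field; by rewrite oner_eq0 h.
rewrite /= (_ : qchoose (K.+2 + K.+1) K.+1 = qchoose (K.+1 + K.+2) K.+1);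
  last by congr qchoose; lia.
rewrite (_ : qchoose (K.+2 + K.+1) K = qchoose (K + K.+3) K); last by congr qchoose; lia.
rewrite !qchooseE (_ : (K + K.+3) = K.+1 + K.+2)%N; last lia.
rewrite (_ : (K.+2 + K.+2) = (K.+1 + K.+2).+1)%N; last lia.
rewrite (qfacS (K.+1 + K.+2)) (_ : (K.+1 + K.+2).+1 = K.+2 + K.+2)%N; last lia.
rewrite qnD (qfacS K.+2) (qfacS K.+1) (qfacS K) (qnS K.+2) (qnS K.+1) (qnS K).
have h1 := qfac_neq0 (K.+1 + K.+2); have h2 := qfac_neq0 K.
have h3 : qn K + q ^+ K != 0 by rewrite -qnS qn_neq0.
have h4 : qn K + q ^+ K + q ^+ K.+1 != 0 by rewrite -!qnS qn_neq0.
have h5 : qn K + q ^+ K + q ^+ K.+1 + q ^+ K.+2 != 0 by rewrite -!qnS qn_neq0.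
rewrite !exprS; rewrite !exprS in h4 h5.
(* eliminate q^K through q^K = 1 - [K](1 - q) so that field sees one atom *)
have qK : q ^+ K = 1 - qn K * (1 - q) by rewrite qn_mul; ring.
rewrite qK in h3 h4 h5 *.
move: (qfac (K.+1 + K.+2)) (qfac K) (qn K) h1 h2 h3 h4 h5 => F0 FK G h1 h2 h3 h4 h5.
field; by rewrite h2 h3 h4 h5.
Qed.

End QCalculus.

Definition alphabet : seq step := [:: E; D; N].

Lemma step_cases (s : step) : [\/ s = E, s = D | s = N].
Proof.
case: s => [[|[|[|i]]] Hi] //.
- by constructor 1; apply: val_inj.
- by constructor 2; apply: val_inj.
- by constructor 3; apply: val_inj.
Qed.

Lemma mem_alphabet (s : step) : s \in alphabet.
Proof. by case: (step_cases s) => ->. Qed.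

Fixpoint words (m : nat) : seq (seq step) :=
  if m is m'.+1 then [seq rcons w c | w <- words m', c <- alphabet] else [:: [::]].

Lemma mem_words m w : (w \in words m) = (size w == m).
Proof.
elim: m w => [|m IH] w; first by case: w.
apply/allpairsP/idP => [[[w' c] [/= w'm _ ->]]|].
  by rewrite size_rcons eqSS -IH.
case/lastP: w => [//|w' c]; rewrite size_rcons eqSS => w'm.
by exists (w', c); rewrite /= IH w'm mem_alphabet.
Qed.

Lemma uniq_words m : uniq (words m).
Proof.
elim: m => [//|m IH].
apply: (@allpairs_uniq_dep _ _ _ (fun w c => rcons w c) (words m) (fun _ => alphabet)) => //.
by move=> [w1 c1] [w2 c2] _ _ /= /rcons_inj [-> ->].
Qed.

Lemma sum_tuples_words (V : nmodType) l (P : pred (seq step)) (F : seq step -> V) :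
  \sum_(W : l.-tuple step | P W) F W = \sum_(w <- words l | P w) F w.
Proof.
rewrite -(big_map val P F); apply: perm_big; apply: uniq_perm.
- by rewrite map_inj_uniq ?index_enum_uniq //; apply: val_inj.
- exact: uniq_words.
move=> w; rewrite mem_words; apply/mapP/idP => [[W _ ->]|wl].
  by rewrite size_tuple.
by exists (Tuple wl); rewrite ?mem_index_enum.
Qed.

Lemma sum_words_rcons (V : nmodType) m (P : pred (seq step)) (F : seq step -> V) :
  \sum_(w <- words m.+1 | P w) F w =
  \sum_(w <- words m) \sum_(c <- alphabet) (if P (rcons w c) then F (rcons w c) else 0).
Proof. by rewrite big_mkcond big_allpairs_dep. Qed.

Lemma sum_alphabet_delta (V : nmodType) (t : step) (H : step -> V) :
  \sum_(c <- alphabet) (if t == c then H c else 0) = H t.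
Proof.
rewrite !big_cons big_nil.
by case: (step_cases t) => -> /=; rewrite ?addr0 ?add0r.
Qed.

Definition cnt (s : step) (w : seq step) : nat := count_mem s w.
Definition last_nonD (w : seq step) : step := last E [seq s <- w | s != D].
Definition ballot (w : seq step) : bool :=
  all (fun k => ycoord (take k w) <= xcoord (take k w))%N (iota 0 (size w).+1).

Lemma cnt_rcons s w c : cnt s (rcons w c) = (cnt s w + (c == s))%N.
Proof. by rewrite /cnt -cats1 count_cat /= addn0. Qed.

Lemma xcoordE w : xcoord w = (cnt E w + cnt D w)%N.
Proof.
elim: w => [//|s w IH]; rewrite /= -/(xcoord w) IH /cnt /=.
by case: (step_cases s) => ->; rewrite /=; lia.
Qed.

Lemma ycoordE w : ycoord w = (cnt N w + cnt D w)%N.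
Proof.
elim: w => [//|s w IH]; rewrite /= -/(ycoord w) IH /cnt /=.
by case: (step_cases s) => ->; rewrite /=; lia.
Qed.

Lemma size_cnt w : size w = (cnt E w + cnt D w + cnt N w)%N.
Proof.
elim: w => [//|s w IH]; rewrite /= IH /cnt /=.
by case: (step_cases s) => ->; rewrite /=; lia.
Qed.

Lemma last_nonD_rcons w c : last_nonD (rcons w c) = if c == D then last_nonD w else c.
Proof.
rewrite /last_nonD filter_rcons; case: (c =P D) => [->|/eqP cD] //=.
by rewrite last_rcons.
Qed.

Lemma ballot_rcons w c :
  ballot (rcons w c) = ballot w && (ycoord (rcons w c) <= xcoord (rcons w c))%N.
Proof.
rewrite /ballot size_rcons -[(size w).+2]addn1 iotaD all_cat add0n.
rewrite [iota _ 1]/= all_seq1 take_oversize ?size_rcons //; congr (_ && _).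
apply: eq_in_all => k; rewrite mem_iota add0n => /andP [_ hk].
by rewrite -cats1 takel_cat.
Qed.

Lemma maj_rcons rank w c :
  maj rank (rcons w c) = (maj rank w + (if rank (last E w) > rank c then size w else 0))%N.
Proof.
case: w => [|x w]; first by rewrite /maj /= !big_ord0 if_same.
rewrite /maj size_rcons /= big_ord_recr /= -rcons_cons; congr addn.
- apply: eq_bigr => i _; have lt_iw := ltn_ord i.
  by rewrite !nth_rcons /= lt_iw (_ : (i < (size w).+1)%N = true) //; lia.
- by rewrite !nth_rcons /= ltnn eqxx ltnSn (last_nth E).
Qed.

Lemma sum_by_last_letters (V : nmodType) (s : seq (seq step)) (P : pred (seq step))
      (G : seq step -> step -> step -> V) :
  \sum_(w <- s | P w) G w (last E w) (last_nonD w) =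
  \sum_(c <- alphabet) \sum_(e <- alphabet)
     \sum_(w <- s | [&& P w, last E w == c & last_nonD w == e]) G w c e.
Proof.
symmetry.
under eq_bigr => c _ do (under eq_bigr => e _ do rewrite big_mkcond; rewrite exchange_big).
rewrite exchange_big [RHS]big_mkcond; apply: eq_bigr => w _.
case: (P w) => /=; last by rewrite big1 // => c _; rewrite big1.
rewrite -[RHS](sum_alphabet_delta (last E w) (fun c => G w c (last_nonD w))).
apply: eq_bigr => c _; case: (last E w == c) => /=; last by rewrite big1.
rewrite -[RHS](sum_alphabet_delta (last_nonD w) (fun e => G w c e)).
by apply: eq_bigr => e _.
Qed.

Section RefinedGF.
Variables (R : fieldType) (q : R) (rank : step -> nat).

(* The factor q^m contributed to maj when x is appended to a word of
   length m whose last letter is c. *)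
Definition dweight (x c : step) (m : nat) : R := if (rank x < rank c)%N then q ^+ m else 1.

Definition shape (a b d : nat) (w : seq step) : bool :=
  [&& ballot w, cnt E w == a, cnt N w == b & cnt D w == d].

Definition rgf (a b d : nat) (c e : step) : R :=
  \sum_(w <- words (a + b + d) | [&& shape a b d w, last E w == c & last_nonD w == e])
     q ^+ maj rank w.

Lemma shape_rcons a b d x w :
  shape (a + (x == E)) (b + (x == N)) (d + (x == D)) (rcons w x) =
  shape a b d w && (b + (x == N) <= a + (x == E))%N.
Proof.
rewrite /shape ballot_rcons xcoordE ycoordE !cnt_rcons !eqn_add2r.
case: (cnt E w =P a) => [->|]; last by rewrite !andbF.
case: (cnt N w =P b) => [->|]; last by rewrite !andbF.
case: (cnt D w =P d) => [->|]; last by rewrite !andbF.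
by rewrite leq_add2r !andbT andbC.
Qed.

Lemma rgf_rcons a b d x e' :
  rgf (a + (x == E)) (b + (x == N)) (d + (x == D)) x e' =
  if (b + (x == N) <= a + (x == E))%N then
    \sum_(c <- alphabet) \sum_(e <- alphabet)
      (if e' == (if x == D then e else x)
       then rgf a b d c e * dweight x c (a + b + d) else 0)
  else 0.
Proof.
set m := (a + b + d)%N; set ok := (_ <= _)%N.
pose G w c e := if e' == (if x == D then e else x)
                then q ^+ maj rank w * dweight x c m else 0.
rewrite [LHS]/rgf.
have -> : (a + (x == E) + (b + (x == N)) + (d + (x == D)) = m.+1)%N.
  by rewrite /m; case: (step_cases x) => -> /=; lia.
have -> : \sum_(c <- alphabet) \sum_(e <- alphabet)
      (if e' == (if x == D then e else x) then rgf a b d c e * dweight x c m else 0)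
    = \sum_(w <- words m | shape a b d w) G w (last E w) (last_nonD w).
  rewrite sum_by_last_letters; apply: eq_bigr => c _; apply: eq_bigr => e _.
  rewrite /G; case: ifP => _; last by rewrite big1.
  by rewrite big_distrl.
(* only the letter y = x can be appended; then compare term by term *)
have term w : w \in words m ->
  \sum_(y <- alphabet) (if [&& shape (a + (x == E)) (b + (x == N)) (d + (x == D)) (rcons w y),
        last E (rcons w y) == x & last_nonD (rcons w y) == e']
     then q ^+ maj rank (rcons w y) else 0)
  = if ok && shape a b d w then G w (last E w) (last_nonD w) else 0.
  rewrite mem_words => /eqP sw.
  pose F y := if [&& shape (a + (x == E)) (b + (x == N)) (d + (x == D)) (rcons w y),
        last E (rcons w y) == x & last_nonD (rcons w y) == e']
     then q ^+ maj rank (rcons w y) else 0.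
  rewrite (eq_bigr (fun y => if x == y then F y else 0)) => [|y _]; last first.
    rewrite /F; case: (x =P y) => [<-|/eqP xy] //.
    by rewrite last_rcons [y == x]eq_sym (negbTE xy) andbF.
  rewrite sum_alphabet_delta /F.
  rewrite last_rcons eqxx shape_rcons last_nonD_rcons maj_rcons exprD sw /G /dweight.
  rewrite -/ok andTb [_ == e']eq_sym.
  case: ok; case: (shape a b d w); rewrite //= ?if_same //.
  by case: ifP => // _; case: ifP => _; rewrite ?expr0 ?mulr1.
rewrite sum_words_rcons (eq_big_seq _ term).
by move: term; case: ok => term; [rewrite [RHS]big_mkcond | rewrite big1].
Qed.

Lemma rgf_rconsE a b d e : rgf a.+1 b d E e =
  if (b <= a.+1)%N then \sum_(c <- alphabet) \sum_(e' <- alphabet)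
    (if e == E then rgf a b d c e' * dweight E c (a + b + d) else 0)
  else 0.
Proof. by have := rgf_rcons a b d E e; rewrite /= !addn0 addn1. Qed.

Lemma rgf_rconsN a b d e : rgf a b.+1 d N e =
  if (b.+1 <= a)%N then \sum_(c <- alphabet) \sum_(e' <- alphabet)
    (if e == N then rgf a b d c e' * dweight N c (a + b + d) else 0)
  else 0.
Proof. by have := rgf_rcons a b d N e; rewrite /= !addn0 addn1. Qed.

Lemma rgf_rconsD a b d e : rgf a b d.+1 D e =
  if (b <= a)%N then \sum_(c <- alphabet) \sum_(e' <- alphabet)
    (if e == e' then rgf a b d c e' * dweight D c (a + b + d) else 0)
  else 0.
Proof. by have := rgf_rcons a b d D e; rewrite /= !addn0 addn1. Qed.

(* Only the empty word has size 0; it ends with E in both senses. *)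
Lemma rgf_empty c e : rgf 0 0 0 c e = if (c == E) && (e == E) then 1 else 0.
Proof.
rewrite /rgf big_cons big_nil /maj /= big_ord0 expr0 addr0.
by rewrite /last_nonD /= !(eq_sym E).
Qed.

(* The last letter of a nonempty word occurs in it, so rgf vanishes when the
   prescribed last letter has multiplicity zero. *)
Lemma cnt_last w : w != [::] -> (0 < cnt (last E w) w)%N.
Proof.
case/lastP: w => [//|w c] _.
by rewrite last_rcons /cnt -has_count has_pred1 mem_rcons mem_head.
Qed.

Lemma rgf_missing_last a b d c e :
  (0 < a + b + d)%N ->
  (forall w, shape a b d w -> cnt c w = 0%N) -> rgf a b d c e = 0.
Proof.
move=> pos no_c; rewrite /rgf big1_seq // => w.
case/andP => /and3P [/no_c cw0 /eqP lc _]; rewrite mem_words => /eqP sw.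
have : w != [::] by rewrite -size_eq0 sw -lt0n.
by move/cnt_last; rewrite lc cw0.
Qed.

Lemma rgf_lastD0 a b e : rgf a b 0 D e = 0.
Proof.
case: (posnP (a + b + 0)) => [ab0|pos].
  have [-> ->] : a = 0%N /\ b = 0%N by lia.
  by rewrite rgf_empty.
by apply: rgf_missing_last => // w /and4P [_ _ _ /eqP].
Qed.

Lemma rgf_lastN0 a d e : rgf a 0 d N e = 0.
Proof.
case: (posnP (a + 0 + d)) => [ad0|pos].
  have [-> ->] : a = 0%N /\ d = 0%N by lia.
  by rewrite rgf_empty.
by apply: rgf_missing_last => // w /and4P [_ _ /eqP].
Qed.

Lemma rgf_lastE0 b d e : (0 < b + d)%N -> rgf 0 b d E e = 0.
Proof. by move=> pos; apply: rgf_missing_last => // w /and4P [_ /eqP]. Qed.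

End RefinedGF.

Lemma schroeder_shape n l w : (n <= l <= 2 * n)%N -> size w = l ->
  schroeder n w = shape (l - n) (l - n) (2 * n - l) w.
Proof.
move=> /andP [le_nl le_l2n] sw; have := size_cnt w; rewrite sw => lw.
rewrite /schroeder -/(ballot w) /shape xcoordE ycoordE.
case: (ballot w); last by rewrite !andbF.
rewrite andbT; apply/andP/and3P => [[/eqP ? /eqP ?]|[/eqP ? /eqP ? /eqP ?]];
  by split; apply/eqP; lia.
Qed.

Section ClosedForm.
Variables (R : fieldType) (q : R) (rank : step -> nat).
Hypothesis q_gen : forall k, (0 < k)%N -> 1 - q ^+ k != 0.
Hypothesis rank_inj : injective rank.

Local Notation dw := (dweight q rank).
Local Notation rgf := (rgf q rank).

Lemma rank_EN : rank E != rank N. Proof. by apply/eqP => /rank_inj. Qed.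
Lemma rank_ED : rank E != rank D. Proof. by apply/eqP => /rank_inj. Qed.
Lemma rank_ND : rank N != rank D. Proof. by apply/eqP => /rank_inj. Qed.

(* The generating function of D-free ballot words with a letters E and b
   letters N ending with e (the empty word ends with E by convention): a
   q-ballot number, i.e. a difference of two q-binomials. *)
Definition ENgf a b (e : step) : R :=
  if e == E then
    (if (b <= a)%N then q ^+ (if (rank E < rank N)%N then b else 0)
                         * (qchoose q (a + b).-1 b - qchoose_pred q (a + b).-1 b) else 0)
  else if e == N then
    (if (b <= a)%N then
       (if b is b'.+1 then q ^+ (if (rank N < rank E)%N then a else 0)
                          * (qchoose q (a + b') b' - q * qchoose_pred q (a + b') b') else 0)
     else 0)
  else 0.

Lemma ENgf_gt a b e : (a < b)%N -> ENgf a b e = 0.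
Proof.
by move=> lt_ab; rewrite /ENgf (_ : (b <= a)%N = false) ?if_same //; lia.
Qed.

Lemma ENgf00 : ENgf 0 0 E = 1.
Proof. by rewrite /ENgf /= !if_same expr0 (qchoose_n0 q_gen) subr0 mul1r. Qed.

Lemma ENgf_recE a b : ENgf a.+1 b E = if (b <= a.+1)%N then
  \sum_(e <- alphabet) ENgf a b e * dw E e (a + b) else 0.
Proof.
rewrite !big_cons big_nil /ENgf /dweight /= ltnn.
have [le_ba1|//] := leqP b a.+1.
have [le_ba|lt_ab] := leqP b a; last first.
  have -> : b = a.+1 by lia.
  by rewrite addnS -addSn /= qchoose_central subrr mulr0; ring.
case: b le_ba1 le_ba => [|b] _ le_ba.
  by rewrite ?if_same ?expr0 ?(qchoose_n0 q_gen) /=; ring.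
rewrite /= !addnS /= (qpascal' q_gen a b) (qpascal'_pred q_gen a b).
case: (ltngtP (rank E) (rank N)) => h; last by move: rank_EN; rewrite h eqxx.
  by rewrite ?exprS ?exprD; ring.
by rewrite ?exprS ?exprD; ring.
Qed.

Lemma ENgf_recN a b : ENgf a b.+1 N = if (b.+1 <= a)%N then
  \sum_(e <- alphabet) ENgf a b e * dw N e (a + b) else 0.
Proof.
rewrite !big_cons big_nil /ENgf /dweight /= ltnn.
have [le_b1a|//] := leqP b.+1 a.
rewrite (_ : (b <= a)%N = true); last by lia.
case: b le_b1a => [|b] _.
  rewrite ?addn0 ?if_same ?expr0 ?(qchoose_n0 q_gen) /=.
  case: (ltngtP (rank E) (rank N)) => h; last by move: rank_EN; rewrite h eqxx.
    by rewrite ?(qchoose_n0 q_gen) ?expr0; ring.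
  by rewrite ?(qchoose_n0 q_gen) ?expr0; ring.
rewrite /= addnS /= (qpascal q_gen) (qpascal_pred q_gen).
case: (ltngtP (rank E) (rank N)) => h; last by move: rank_EN; rewrite h eqxx.
  by rewrite ?exprS ?exprD; ring.
by rewrite ?exprS ?exprD; ring.
Qed.

(* The closed form of rgf: the letters D are inserted into a D-free ballot
   word, which yields the q-binomial factor; the words ending with D and
   those ending with their last non-D letter are counted separately. *)
Definition cgf a b d (c e : step) : R :=
  if e == D then 0 else
  if c == D then
    (if d is d'.+1 then ENgf a b e * dw D e (a + b) * qchoose q (a + b + d') d' else 0)
  else if c == e then ENgf a b e * dw e D d * qchoose q (a + b + d).-1 d
  else 0.

(* Pascal-type identity behind cgf: for ranks re != rD of the last non-D
   letter and of D, and any rank rx of a letter appended afterwards. *)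
Lemma insert_D_identity C p d re rD rx : re != rD ->
  (if d is d'.+1 then C * (if (rD < re)%N then q ^+ p else 1) * qchoose q (p + d') d'
                      * (if (rx < rD)%N then q ^+ (p + d) else 1) else 0)
  + C * (if (re < rD)%N then q ^+ d else 1) * qchoose q (p + d).-1 d
     * (if (rx < re)%N then q ^+ (p + d) else 1)
  = C * (if (rx < re)%N then q ^+ p else 1) * (if (rx < rD)%N then q ^+ d else 1)
      * qchoose q (p + d) d.
Proof.
move=> re_rD; case: d => [|d].
  by rewrite !addn0 !expr0 !if_same !(qchoose_n0 q_gen); ring.
rewrite addnS /=.
case: (ltngtP re rD) => h1; last by move: re_rD; rewrite h1 eqxx.
- case: (ltngtP rx rD) => h2; case: (ltngtP rx re) => h3; try lia;
    first [rewrite (qpascal q_gen (p + d) d) ?exprS ?exprD; ring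
          |rewrite (qpascal' q_gen p d) ?exprS ?exprD; ring].
- case: (ltngtP rx rD) => h2; case: (ltngtP rx re) => h3; try lia;
    first [rewrite (qpascal q_gen (p + d) d) ?exprS ?exprD; ring
          |rewrite (qpascal' q_gen p d) ?exprS ?exprD; ring].
Qed.

Lemma cgf_append a b d e x :
  \sum_(c <- alphabet) cgf a b d c e * dw x c (a + b + d)
  = ENgf a b e * dw x e (a + b) * dw x D d * qchoose q (a + b + d) d.
Proof.
rewrite !big_cons big_nil /cgf /dweight.
case: (step_cases e) => ->.
- rewrite /= -(insert_D_identity (ENgf a b E) (a + b) d (rank x) rank_ED).
  by case: d => [|d] /=; ring.
- by rewrite /ENgf /=; ring.
- rewrite /= -(insert_D_identity (ENgf a b N) (a + b) d (rank x) rank_ND).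
  by case: d => [|d] /=; ring.
Qed.

Lemma cgf_sum a b d e :
  \sum_(c <- alphabet) cgf a b d c e = ENgf a b e * qchoose q (a + b + d) d.
Proof.
set rx := (rank E + rank D + rank N).+1.
have [hE hD hN] : [/\ (rx < rank E)%N = false, (rx < rank D)%N = false
                    & (rx < rank N)%N = false] by rewrite /rx; split; lia.
rewrite !big_cons big_nil /cgf /dweight.
case: (step_cases e) => ->.
- have := insert_D_identity (ENgf a b E) (a + b) d rx rank_ED.
  rewrite hE hD !mulr1 /= => <-.
  by case: d => [|d] /=; ring.
- by rewrite /ENgf /=; ring.
- have := insert_D_identity (ENgf a b N) (a + b) d rx rank_ND.
  rewrite hN hD !mulr1 /= => <-.
  by case: d => [|d] /=; ring.
Qed.

Section Induction.
Variable m : nat.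
Hypothesis IH : forall a b d c e, (a + b + d)%N = m -> rgf a b d c e = cgf a b d c e.

Lemma append_closed a b d x : (a + b + d)%N = m ->
  \sum_(c <- alphabet) \sum_(e <- alphabet) rgf a b d c e * dw x c (a + b + d)
  = \sum_(e <- alphabet) ENgf a b e * dw x e (a + b) * dw x D d * qchoose q (a + b + d) d.
Proof.
move=> abd; rewrite exchange_big; apply: eq_bigr => e _.
by rewrite -cgf_append; apply: eq_bigr => c _; rewrite IH.
Qed.

Lemma rgf_closed_lastE a b d e : (a + b + d)%N = m.+1 -> rgf a b d E e = cgf a b d E e.
Proof.
case: a => [|a] abd.
  rewrite rgf_lastE0; last by lia.
  rewrite /cgf; case: (step_cases e) => -> //=.
  case: b abd => [|b] abd; last by rewrite ENgf_gt // !mul0r.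
  by rewrite qchoose_gt ?mulr0 //; lia.
rewrite rgf_rconsE; case: (step_cases e) => -> /=.
- rewrite append_closed; last by lia.
  rewrite /cgf /= ENgf_recE; case: ifP => _; last by rewrite !mul0r.
  by rewrite !big_distrl.
- by rewrite big1 ?if_same // => c _; rewrite big1.
- by rewrite big1 ?if_same // => c _; rewrite big1.
Qed.

Lemma rgf_closed_lastN a b d e : (a + b + d)%N = m.+1 -> rgf a b d N e = cgf a b d N e.
Proof.
case: b => [|b] abd.
  by rewrite rgf_lastN0 /cgf; case: (step_cases e) => -> //=; rewrite /ENgf /= !mul0r.
rewrite rgf_rconsN; case: (step_cases e) => -> /=.
- by rewrite big1 ?if_same // => c _; rewrite big1.
- by rewrite big1 ?if_same // => c _; rewrite big1.
- rewrite append_closed; last by lia.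
  rewrite /cgf /= ENgf_recN (_ : (a + b.+1 + d).-1 = a + b + d)%N; last by lia.
  case: ifP => _; last by rewrite !mul0r.
  by rewrite !big_distrl.
Qed.

Lemma rgf_closed_lastD a b d e : (a + b + d)%N = m.+1 -> rgf a b d D e = cgf a b d D e.
Proof.
case: d => [|d] abd; first by rewrite rgf_lastD0 /cgf /= if_same.
rewrite rgf_rconsD.
have -> : \sum_(c <- alphabet) \sum_(e' <- alphabet)
    (if e == e' then rgf a b d c e' * dw D c (a + b + d) else 0)
  = \sum_(c <- alphabet) cgf a b d c e * dw D c (a + b + d).
  apply: eq_bigr => c _.
  by rewrite (sum_alphabet_delta e (fun e' => rgf a b d c e' * _)) IH //; lia.
rewrite cgf_append /dweight ltnn mulr1 /cgf /=.
case: ifP => le_ba; last by rewrite ENgf_gt ?mul0r ?if_same //; lia.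
by case: (step_cases e) => -> //=; rewrite /ENgf /= !mul0r.
Qed.

End Induction.

Lemma rgf_closed a b d c e : rgf a b d c e = cgf a b d c e.
Proof.
move: {2}(a + b + d)%N (erefl (a + b + d)%N) => m.
elim: m a b d c e => [|m IH] a b d c e abd.
  have [-> -> ->] : [/\ a = 0, b = 0 & d = 0]%N by split; lia.
  rewrite rgf_empty /cgf /dweight.
  by case: (step_cases c) => ->; case: (step_cases e) => -> //=;
    rewrite ?ENgf00 ?expr0 ?if_same ?(qchoose_n0 q_gen) ?mulr1.
case: (step_cases c) => ->.
- exact: (rgf_closed_lastE IH).
- exact: (rgf_closed_lastD IH).
- exact: (rgf_closed_lastN IH).
Qed.

Lemma schroeder_gf n l : (n <= l <= 2 * n)%N ->
  \sum_(w <- words l | schroeder n w) q ^+ maj rank w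
  = qchoose q l (2 * n - l) * (ENgf (l - n) (l - n) E + ENgf (l - n) (l - n) N).
Proof.
move=> nl; set k := (l - n)%N; set d := (2 * n - l)%N.
have lE : l = (k + k + d)%N by move: nl; rewrite /k /d; lia.
rewrite big_seq_cond (eq_bigl (fun w => (w \in words l) && shape k k d w)); last first.
  move=> w; case: (boolP (w \in words l)) => //=; rewrite mem_words => /eqP sw.
  exact: schroeder_shape.
rewrite -big_seq_cond (sum_by_last_letters _ _ (fun w c e => q ^+ maj rank w)).
rewrite (eq_bigr (fun c => \sum_(e <- alphabet) cgf k k d c e)); last first.
  by move=> c _; apply: eq_bigr => e _; rewrite -rgf_closed /rgf -lE.
rewrite exchange_big (eq_bigr (fun e => ENgf k k e * qchoose q l d)); last first.
  by move=> e _; rewrite cgf_sum -lE.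
by rewrite !big_cons big_nil /ENgf /=; ring.
Qed.

Lemma ENgf_diag_EN k : (rank E < rank N)%N ->
  ENgf k k E + ENgf k k N = (qn q k.+1)^-1 * qbin q (2 * k) k.
Proof.
move=> lt_EN; rewrite /ENgf /= leqnn lt_EN (_ : (rank N < rank E)%N = false); last by lia.
case: k => [|k].
  rewrite /= expr0 (qchoose_n0 q_gen) subr0 mul1r addr0 qn1 invr1 mul1r.
  by rewrite /qbin /= qfac0 mulr1 divff // oner_eq0.
rewrite addnS /= qchoose_central subrr mulr0 add0r expr0 mul1r (qcatalan q_gen).
by rewrite mul2n -addnn.
Qed.

Lemma ENgf_diag_NE k : (rank N < rank E)%N ->
  ENgf k k E + ENgf k k N = q ^+ k / qn q k.+1 * qbin q (2 * k) k.
Proof.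
move=> lt_NE; rewrite /ENgf /= leqnn lt_NE (_ : (rank E < rank N)%N = false); last by lia.
case: k => [|k].
  rewrite /= expr0 (qchoose_n0 q_gen) subr0 mul1r addr0 qn1 invr1 mulr1.
  by rewrite mul1r /qbin muln0 subnn qfac0 mulr1 invr1 mulr1.
rewrite addnS /= qchoose_central subrr mulr0 add0r (qcatalan q_gen).
by rewrite mul2n -addnn mulrA.
Qed.

End ClosedForm.

Lemma qv_gen k : (0 < k)%N -> 1 - qv ^+ k != 0.
Proof.
move=> k0; rewrite /qv -tofracXn -tofrac1 -tofracB tofrac_eq0 subr_eq0.
apply/negP => /eqP/(congr1 (fun p : {poly rat} => size p)).
by rewrite size_polyXn size_poly1; lia.
Qed.

Lemma qint_qn : qint = qn qv. Proof. by []. Qed.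
Lemma qbinom_qbin : qbinom = qbin qv. Proof. by []. Qed.

Theorem theorem1p1 (n l : nat) (rank : step -> nat) :
  injective rank -> (n <= l <= 2 * n)%N ->
  ((rank E < rank N)%N ->
     \sum_(W : l.-tuple step | schroeder n W) qv ^+ maj rank W
     = (qint (l - n).+1)^-1 * qbinom (2 * (l - n)) (l - n) * qbinom l (2 * n - l))
  /\
  ((rank N < rank E)%N ->
     \sum_(W : l.-tuple step | schroeder n W) qv ^+ maj rank W
     = qv ^+ (l - n) / qint (l - n).+1 * qbinom (2 * (l - n)) (l - n) * qbinom l (2 * n - l)).
Proof.
move=> rank_inj nl; rewrite qint_qn qbinom_qbin.
rewrite (sum_tuples_words l (schroeder n) (fun w => qv ^+ maj rank w)).
rewrite (schroeder_gf qv_gen rank_inj nl) qchoose_le; last by lia.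
split=> ?; rewrite mulrC.
- by rewrite (ENgf_diag_EN qv_gen).
- by rewrite (ENgf_diag_NE qv_gen).
Qed.
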